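(* Let ${\cal G}$ be a graph as described in the context, and let $\rho_{\sup}$, $\rho_{\inf}$ be the supremum and infimum of its half-degree. Let $f\in C^0_{\rm fn}({\cal G})$ be edgewise convex (its restriction to each edge interval is convex, not necessarily strictly) and non-negative at all vertices. Then $$\int_{\cal G} f\,d{\cal E}\le \rho_{\sup}\int_{\cal G} f\,d{\cal V}.$$ Similarly, if $f\in C^0_{\rm fn}({\cal G})$ is non-negative and edgewise concave, then $\int_{\cal G} f\,d{\cal E}\ge \rho_{\inf}\int_{\cal G} f\,d{\cal V}$. If ${\cal G}$ is regular (i.e. $\rho_{\inf}=\rho_{\sup}$), the non-negativity requirements may be dropped.
   Context: A graph ${\cal G}$ consists of an undirected graph $(V,E)$ (possibly infinite; multiple edges and self-loops allowed), a length $\ell_e>0$ for each edge $e$, a specified subset $\partial{\cal G}\subseteq V$ of boundary vertices, a vertex measure ${\cal V}$ (a measure supported on $V$ with ${\cal V}(v)>0$ for every $v\in V$), and an edge measure ${\cal E}$ (a measure giving zero mass to every vertex whose restriction to the interior of each edge $e$ equals $a_e>0$ times Lebesgue measure). ${\cal G}$ is identified with its geometric realization: the metric space obtained by attaching, for each edge $e$ with endpoints $u,v$, a closed interval of length $\ell_e$ joining $u$ and $v$. $C^0({\cal G})$ is the set of continuous functions on this space; a function is of finite type if its support lies in the union of finitely many vertices and edges, and $C^0_{\rm fn}({\cal G})$ denotes the finite-type elements of $C^0({\cal G})$. The half-degree of a vertex $v$ is $\rho(v)={\cal V}(v)^{-1}\sum_{e\ni v}{\cal E}(e)/2$ (sum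 over edges having $v$ as an endpoint), and $\rho_{\sup},\rho_{\inf}$ are the supremum and infimum of $\rho$ over $V$. *)

From HB Require Import structures.
From mathcomp Require Import all_boot all_order all_algebra.
From mathcomp Require Import all_classical all_reals all_analysis.
Set Implicit Arguments. Unset Strict Implicit. Unset Printing Implicit Defensive.
Import Order.TTheory GRing.Theory Num.Theory.
Import numFieldNormedType.Exports.
Local Open Scope classical_set_scope.
Local Open Scope ring_scope.

(* A (metric) graph with vertex and edge measures.
   [endpt e false] is the endpoint of e at parameter 0 and [endpt e true]
   the endpoint at parameter [len e]; a self-loop has both equal.
   The vertex measure is given by its (positive) atoms [vmeas v]; the edge
   measure is given by its (positive) density [edens e] w.r.t. Lebesgue
   measure on the interior of edge e (it charges no vertex). *)
Record mgraph (R : realType) := MGraph {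
  vert : choiceType;
  edge : choiceType;
  endpt : edge -> bool -> vert;
  len : edge -> R;
  len_gt0 : forall e, 0 < len e;
  bdry : set vert;
  vmeas : vert -> R;
  vmeas_gt0 : forall v, 0 < vmeas v;
  edens : edge -> R;
  edens_gt0 : forall e, 0 < edens e }.

Arguments vert {R} G : rename.
Arguments edge {R} G : rename.
Arguments endpt {R} G _ _ : rename.
Arguments len {R} G _ : rename.
Arguments bdry {R} G _ : rename.
Arguments vmeas {R} G _ : rename.
Arguments edens {R} G _ : rename.

Section Defs.
Variables (R : realType) (G : mgraph R).

Definition emass (e : edge G) : R := edens G e * len G e.

(* Half-degree rho(v) = V(v)^-1 * sum_{e ∋ v} E(e)/2, the sum running over
   edge-ends (a self-loop at v contributes twice); extended-real valued since
   a vertex may have infinitely many incident edges. *)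
Definition half_degree (v : vert G) : \bar R :=
  ((vmeas G v)^-1)%:E *
  esum [set p : (edge G * bool)%type | endpt G p.1 p.2 = v]
       (fun p => (emass p.1 / 2)%:E).

Definition rho_sup : \bar R := ereal_sup (range half_degree).
Definition rho_inf : \bar R := ereal_inf (range half_degree).

(* A function on the geometric realization: values at the vertices and,
   on each edge e, a function on the parameter interval [0, len e]. *)
Record gfun := GFun { fv : vert G -> R; fe : edge G -> R -> R }.

Definition gcontinuous (f : gfun) : Prop :=
  (forall e, {within `[0, len G e], continuous (fe f e)}) /\
  (forall e, fe f e 0 = fv f (endpt G e false)) /\
  (forall e, fe f e (len G e) = fv f (endpt G e true)).

(* Finite type: the support lies in the union of finitely many vertices
   and (closed) edges. *)
Definition finite_type (f : gfun) : Prop :=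
  exists (A : set (vert G)) (B : set (edge G)),
    finite_set A /\ finite_set B /\
    (forall e, ~ B e -> forall x, x \in `]0, len G e[ -> fe f e x = 0) /\
    (forall v, ~ A v -> (forall e b, B e -> endpt G e b <> v) -> fv f v = 0).

Definition C0fn (f : gfun) : Prop := gcontinuous f /\ finite_type f.

Definition edgewise_convex (f : gfun) : Prop :=
  forall e, convex_function (`[0, len G e] : set (convex_lmodType R^o))
                            (fe f e : convex_lmodType R^o -> R^o).

Definition edgewise_concave (f : gfun) : Prop :=
  forall e, convex_function (`[0, len G e] : set (convex_lmodType R^o))
                            ((fun x => - fe f e x) : convex_lmodType R^o -> R^o).

Definition gnonneg (f : gfun) : Prop :=
  (forall v, 0 <= fv f v) /\
  (forall e x, x \in `[0, len G e] -> 0 <= fe f e x).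

Definition int_E (f : gfun) : R :=
  \sum_(e \in [set: edge G])
     (edens G e * Rintegral lebesgue_measure `[0, len G e] (fe f e)).

Definition int_V (f : gfun) : R :=
  \sum_(v \in [set: vert G]) (fv f v * vmeas G v).

End Defs.

From HB Require Import structures.
From mathcomp Require Import all_boot all_order all_algebra.
From mathcomp Require Import all_classical all_reals all_analysis.
From mathcomp Require Import ring.
Import Order.TTheory GRing.Theory Num.Theory.
Import numFieldNormedType.Exports.
Set Implicit Arguments. Unset Strict Implicit. Unset Printing Implicit Defensive.
Local Open Scope classical_set_scope.
Local Open Scope ring_scope.

(* On an edge of length l, a convex g lies below its chord, so integrating gives
   the trapezoid bound  int_0^l g <= l (g 0 + g l) / 2  (Hermite-Hadamard).
   Multiplying by the density a_e and summing over the finitely many edges in the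
   support of f turns  int_G f dE  into at most  sum_e E(e)/2 (f(e_0) + f(e_1)),
   and regrouping these endpoint terms by vertex gives  sum_v f(v) rho(v) V(v).
   When f >= 0 at the vertices each rho(v) can be replaced by rho_sup, giving
   rho_sup int_G f dV; the concave case is the mirror image, and on a regular
   graph rho(v) is a constant that factors out without any sign condition. *)

Section HermiteHadamard.
Variable R : realType.
Implicit Types (a b c k : R) (g : R -> R).

Lemma Rintegral_affine a b c k : a < b ->
  Rintegral lebesgue_measure `[a, b] (fun x => c + k * x) =
  c * (b - a) + k * (b ^+ 2 - a ^+ 2) / 2.
Proof.
move=> ab; pose p : {poly R} := c *: 'X + (k / 2) *: 'X^2.
have FTC : (\int[lebesgue_measure]_(x in `[a, b]) (c + k * x)%:E =
             (p.[b])%:E - (p.[a])%:E)%E.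
  apply: (continuous_FTC2 ab).
  - apply: continuous_subspaceT => x.
    by apply: cvgD; [exact: cvg_cst | apply: cvgM; [exact: cvg_cst | exact: cvg_id]].
  - split=> [x _||]; first exact: derivable_horner.
    + exact/cvg_at_right_filter/continuous_horner.
    + exact/cvg_at_left_filter/continuous_horner.
  - move=> x _; rewrite -derivE /p derivD !derivZ derivX derivXn !hornerE.
    by field.
by rewrite /Rintegral FTC /p !hornerE /=; field.
Qed.

Definition chord a b g x := g a + (g b - g a) / (b - a) * (x - a).

Lemma continuous_chord a b g : continuous (chord a b g).
Proof.
move=> x; apply: cvgD; first exact: cvg_cst.
by apply: cvgM; [exact: cvg_cst | apply: cvgB; [exact: cvg_id | exact: cvg_cst]].
Qed.

Lemma Rintegral_chord a b g : a < b ->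
  Rintegral lebesgue_measure `[a, b] (chord a b g) = (b - a) * (g a + g b) / 2.
Proof.
move=> ab; have ba0 : b - a != 0 by rewrite subr_eq0 gt_eqF.
have -> : chord a b g =
    (fun x => (g a - (g b - g a) / (b - a) * a) + (g b - g a) / (b - a) * x).
  by apply/funext => x; rewrite /chord; ring.
by rewrite Rintegral_affine //; field.
Qed.

Lemma chordN a b g x : chord a b (fun y => - g y) x = - chord a b g x.
Proof. by rewrite /chord; ring. Qed.

Lemma convex_le_chord a b g : a < b ->
  convex_function (`[a, b] : set (convex_lmodType R^o))
    (g : convex_lmodType R^o -> R^o) ->
  {in `[a, b], forall x, g x <= chord a b g x}.
Proof.
move=> ab gconv x; rewrite in_itv /= => /andP[ax xb].
have ba_gt0 : 0 < b - a by rewrite subr_gt0.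
have ba0 : b - a != 0 by rewrite subr_eq0 gt_eqF.
have t0 : 0 <= (x - a) / (b - a) by rewrite divr_ge0 ?subr_ge0 // ltW.
have t1 : (x - a) / (b - a) <= 1 by rewrite ler_pdivrMr // mul1r lerD2r.
set t := (x - a) / (b - a) in t0 t1 *.
have : g (t * b + (1 - t) * a) <= t * g b + (1 - t) * g a.
  by apply: (gconv (Itv01 t0 t1)); rewrite inE /= in_itv /= lexx ltW.
have -> : t * b + (1 - t) * a = x by rewrite /t; field.
suff -> : t * g b + (1 - t) * g a = chord a b g x by [].
by rewrite /t /chord; field.
Qed.

Lemma within_continuous_integrable a b g : {within `[a, b], continuous g} ->
  lebesgue_measure.-integrable `[a, b] (EFin \o g).
Proof.
by move=> gcont; apply: continuous_compact_integrable => //; exact: segment_compact.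
Qed.

Lemma chord_integrable a b g :
  lebesgue_measure.-integrable `[a, b] (EFin \o chord a b g).
Proof. exact/within_continuous_integrable/continuous_subspaceT/continuous_chord. Qed.

Lemma convex_Rintegral_le_trapezoid a b g : a < b ->
  {within `[a, b], continuous g} ->
  convex_function (`[a, b] : set (convex_lmodType R^o))
    (g : convex_lmodType R^o -> R^o) ->
  Rintegral lebesgue_measure `[a, b] g <= (b - a) * (g a + g b) / 2.
Proof.
move=> ab gcont gconv; rewrite -Rintegral_chord //.
apply: le_Rintegral => //.
- exact: within_continuous_integrable.
- exact: chord_integrable.
- by move=> x xab; apply: convex_le_chord.
Qed.

Lemma concave_trapezoid_le_Rintegral a b g : a < b ->
  {within `[a, b], continuous g} ->
  convex_function (`[a, b] : set (convex_lmodType R^o))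
    ((fun x => - g x) : convex_lmodType R^o -> R^o) ->
  (b - a) * (g a + g b) / 2 <= Rintegral lebesgue_measure `[a, b] g.
Proof.
move=> ab gcont gconc; rewrite -Rintegral_chord //.
apply: le_Rintegral => //.
- exact: chord_integrable.
- exact: within_continuous_integrable.
- move=> x xab; rewrite -lerN2 -chordN.
  by have := convex_le_chord ab gconc xab.
Qed.

End HermiteHadamard.

Lemma continuous_eq0_itvcc (R : realType) (a b : R) (g : R -> R) : a < b ->
  {within `[a, b], continuous g} -> {in `]a, b[, forall x, g x = 0} ->
  {in `[a, b], forall x, g x = 0}.
Proof.
move=> ab gcont g0 x; rewrite in_itv /= => /andP[ax xb].
have [_ ga gb] := (continuous_within_itvP g ab).1 gcont.
have [<-|an] := eqVneq a x.
  have g0a : g y @[y --> a^'+] --> 0.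
    apply: cvg_near_cst; near=> y; apply: g0; rewrite in_itv /=.
    by apply/andP; split; near: y; [exact: nbhs_right_gt | exact: nbhs_right_lt].
  exact: cvg_unique ga g0a.
have [->|bn] := eqVneq x b.
  have g0b : g y @[y --> b^'-] --> 0.
    apply: cvg_near_cst; near=> y; apply: g0; rewrite in_itv /=.
    by apply/andP; split; near: y; [exact: nbhs_left_gt | exact: nbhs_left_lt].
  exact: cvg_unique gb g0b.
by apply: g0; rewrite in_itv /= !lt_neqAle an bn ax xb.
Unshelve. all: by end_near.
Qed.

Lemma partition_big_seq (R : nmodType) (T U : eqType) (s : seq T) (L : seq U)
    (key : T -> U) (F : T -> R) :
  uniq L -> {in s, forall x, key x \in L} ->
  \sum_(x <- s) F x = \sum_(u <- L) \sum_(x <- s | key x == u) F x.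
Proof.
move=> L_uniq sL; under [RHS]eq_bigr do rewrite big_mkcond.
rewrite exchange_big /=; apply: eq_big_seq => x xs.
rewrite -big_mkcond /= -big_filter.
have -> : [seq u <- L | key x == u] = [:: key x].
  by rewrite -(filter_pred1_uniq L_uniq (sL x xs)); apply: eq_filter => u; rewrite eq_sym.
by rewrite big_seq1.
Qed.

Lemma fsbigT_seq (R : nmodType) (T : choiceType) (r : seq T) (F : T -> R) :
  uniq r -> (forall i, i \notin r -> F i = 0) ->
  \sum_(i \in [set: T]) F i = \sum_(i <- r) F i.
Proof.
move=> r_uniq F0; rewrite (fsbigE r) //; last by move=> i _; exact: F0.
by under eq_bigl do rewrite in_setT.
Qed.

Section FiniteTypeFunction.
Variables (R : realType) (G : mgraph R) (f : gfun G).
Hypothesis fe_cont : forall e, {within `[0, len G e], continuous (fe f e)}.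
Hypothesis fe_0 : forall e, fe f e 0 = fv f (endpt G e false).
Hypothesis fe_len : forall e, fe f e (len G e) = fv f (endpt G e true).
Variables (A : set (vert G)) (B : set (edge G)).
Hypotheses (A_fin : finite_set A) (B_fin : finite_set B).
Hypothesis fe_out : forall e, ~ B e -> forall x, x \in `]0, len G e[ -> fe f e x = 0.
Hypothesis fv_out :
  forall v, ~ A v -> (forall e b, B e -> endpt G e b <> v) -> fv f v = 0.

Let sB := finmap.enum_fset (fset_set B).

Let ends := [seq (e, b) | e <- sB, b <- [:: false; true]].

Let endv (p : edge G * bool) := endpt G p.1 p.2.

Let verts := undup (finmap.enum_fset (fset_set A) ++ map endv ends).

Let half_edge_mass (v : vert G) : R :=
  \sum_(p <- ends | endv p == v) emass p.1 / 2.

Let trapezoid (e : edge G) : R :=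
  emass e / 2 * (fv f (endpt G e false) + fv f (endpt G e true)).

(* A vertex of infinite degree has [half_degree v = +oo], but then [fv f v = 0]
   and its term vanishes since [0 * +oo = 0] in [\bar R]. *)
Let degree_sum : \bar R :=
  \sum_(v <- verts) half_degree v * (fv f v * vmeas G v)%:E.

Lemma mem_sB e : (e \in sB) = `[< B e >].
Proof. by rewrite in_fset_set // inE. Qed.

Lemma mem_ends e b : B e -> (e, b) \in ends.
Proof.
move=> Be; apply/allpairsP; exists (e, b); split => //=.
  by rewrite mem_sB; apply/asboolP.
by case: b.
Qed.

Lemma fv_endpt e b : fv f (endpt G e b) = fe f e (if b then len G e else 0).
Proof. by case: b; rewrite ?fe_0 ?fe_len. Qed.

Lemma fe_eq0_off_B e : ~ B e -> {in `[0, len G e], forall x, fe f e x = 0}.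
Proof.
by move=> nBe; apply: continuous_eq0_itvcc (len_gt0 e) (@fe_cont e) (fe_out nBe).
Qed.

Lemma incident_edge_in_B v e b : fv f v != 0 -> endpt G e b = v -> B e.
Proof.
move=> fv0 ev; apply: contrapT => nBe; move: fv0; rewrite -ev fv_endpt.
rewrite fe_eq0_off_B ?eqxx //.
by case: (b); rewrite in_itv /= lexx ltW ?len_gt0.
Qed.

Lemma int_E_seq :
  int_E f = \sum_(e <- sB) edens G e * Rintegral lebesgue_measure `[0, len G e] (fe f e).
Proof.
apply: fsbigT_seq; first exact: finmap.fset_uniq.
move=> e; rewrite mem_sB => /asboolPn nBe.
rewrite (@eq_Rintegral _ _ _ lebesgue_measure _ (fun=> 0)).
  by rewrite Rintegral_cst // mul0r mulr0.
by move=> x /set_mem; exact: fe_eq0_off_B.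
Qed.

Lemma int_V_seq : int_V f = \sum_(v <- verts) fv f v * vmeas G v.
Proof.
apply: fsbigT_seq; first exact: undup_uniq.
move=> v; rewrite mem_undup mem_cat negb_or => /andP[vA vends].
rewrite fv_out ?mul0r //.
  by move=> Av; move/negP: vA; apply; rewrite in_fset_set // inE.
move=> e b Be ev; move/negP: vends; apply; rewrite -ev.
by apply/mapP; exists (e, b); first exact: mem_ends.
Qed.

Lemma half_degree_supp v : fv f v != 0 ->
  half_degree v = (half_edge_mass v / vmeas G v)%:E.
Proof.
move=> fv0; rewrite /half_degree.
have ends_uniq : uniq ends.
  apply: allpairs_uniq => //; first exact: finmap.fset_uniq.
  by move=> [? ?] [? ?] _ _ /= ->.
have -> : [set p : edge G * bool | endpt G p.1 p.2 = v] = [set` (fun p => endv p == v)].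
  by apply/seteqP; split => p /=; rewrite unfold_in => /eqP.
rewrite esum_fset; first last.
- by move=> p _; rewrite lee_fin divr_ge0 // mulr_ge0 // ltW ?edens_gt0 ?len_gt0.
- apply: sub_finite_set (finite_seq ends) => -[e b] /= /[!unfold_in] /eqP ev.
  exact/mem_ends/(incident_edge_in_B fv0 ev).
rewrite -(@bigfs _ _ _ _ ends) //; last first.
  by move=> -[e b] /eqP ev /negP[]; exact/mem_ends/(incident_edge_in_B fv0 ev).
by rewrite sumEFin -EFinM mulrC.
Qed.

Lemma degree_sum_trapezoid : degree_sum = (\sum_(e <- sB) trapezoid e)%:E.
Proof.
have -> : \sum_(e <- sB) trapezoid e = \sum_(p <- ends) emass p.1 / 2 * fv f (endv p).
  rewrite big_allpairs; apply: eq_bigr => e _.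
  by rewrite big_cons big_seq1 /trapezoid mulrDr.
rewrite (partition_big_seq (L := verts) (key := endv)) ?undup_uniq //; last first.
  by move=> p pends; rewrite mem_undup mem_cat map_f ?orbT.
rewrite /degree_sum -sumEFin; apply: eq_bigr => v _.
have [fv0|fvn0] := eqVneq (fv f v) 0.
  by rewrite fv0 mul0r mule0 big1 // => p /eqP ->; rewrite fv0 mulr0.
rewrite half_degree_supp // -EFinM; congr EFin.
rewrite mulrCA divfK ?gt_eqF ?vmeas_gt0 // mulr_sumr.
by apply: eq_bigr => p /eqP ->; rewrite mulrC.
Qed.

Lemma trapezoidE e :
  trapezoid e = edens G e * ((len G e - 0) * (fe f e 0 + fe f e (len G e)) / 2).
Proof. by rewrite /trapezoid /emass fe_0 fe_len subr0; ring. Qed.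

Lemma int_E_le_trapezoid : edgewise_convex f -> int_E f <= \sum_(e <- sB) trapezoid e.
Proof.
move=> fconv; rewrite int_E_seq; apply: ler_sum => e _.
rewrite trapezoidE; apply: ler_wpM2l; first exact/ltW/edens_gt0.
exact: convex_Rintegral_le_trapezoid (len_gt0 e) (@fe_cont e) (fconv e).
Qed.

Lemma trapezoid_le_int_E : edgewise_concave f -> \sum_(e <- sB) trapezoid e <= int_E f.
Proof.
move=> fconc; rewrite int_E_seq; apply: ler_sum => e _.
rewrite trapezoidE; apply: ler_wpM2l; first exact/ltW/edens_gt0.
exact: concave_trapezoid_le_Rintegral (len_gt0 e) (@fe_cont e) (fconc e).
Qed.

Lemma degree_sum_le_rho_sup : (forall v, 0 <= fv f v) ->
  (degree_sum <= rho_sup G * (int_V f)%:E)%E.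
Proof.
move=> fv_ge0; rewrite int_V_seq -sumEFin ge0_sume_distrr; last first.
  by move=> v _; rewrite lee_fin mulr_ge0 // ltW ?vmeas_gt0.
apply: lee_sum => v _; apply: lee_wpmul2r.
  by rewrite lee_fin mulr_ge0 // ltW ?vmeas_gt0.
by apply: ereal_sup_ubound; exists v.
Qed.

Lemma rho_inf_le_degree_sum : (forall v, 0 <= fv f v) ->
  (rho_inf G * (int_V f)%:E <= degree_sum)%E.
Proof.
move=> fv_ge0; rewrite int_V_seq -sumEFin ge0_sume_distrr; last first.
  by move=> v _; rewrite lee_fin mulr_ge0 // ltW ?vmeas_gt0.
apply: lee_sum => v _; apply: lee_wpmul2r.
  by rewrite lee_fin mulr_ge0 // ltW ?vmeas_gt0.
by apply: ereal_inf_lbound; exists v.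
Qed.

Lemma regular_degree_sum : rho_inf G = rho_sup G ->
  degree_sum = (rho_sup G * (int_V f)%:E)%E.
Proof.
move=> regular; rewrite int_V_seq.
have [fv0|/existsNP[v0 /eqP fv0]] := pselect (forall v, fv f v = 0).
  rewrite big1 ?mule0 => [|v _]; last by rewrite fv0 mul0r.
  by rewrite /degree_sum big1 // => v _; rewrite fv0 mul0r mule0.
have half_degree_const (v : vert G) : half_degree v = rho_sup G.
  apply/le_anti/andP; split; first by apply: ereal_sup_ubound; exists v.
  by rewrite -regular; apply: ereal_inf_lbound; exists v.
have rhoE : rho_sup G = (half_edge_mass v0 / vmeas G v0)%:E.
  by rewrite -(half_degree_const v0) half_degree_supp.
rewrite /degree_sum rhoE -EFinM mulr_sumr -sumEFin.
by apply: eq_bigr => v _; rewrite half_degree_const rhoE -EFinM.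
Qed.

Lemma int_E_bounds :
  [/\ edgewise_convex f -> (forall v, 0 <= fv f v) ->
        ((int_E f)%:E <= rho_sup G * (int_V f)%:E)%E,
      edgewise_concave f -> (forall v, 0 <= fv f v) ->
        (rho_inf G * (int_V f)%:E <= (int_E f)%:E)%E,
      rho_inf G = rho_sup G -> edgewise_convex f ->
        ((int_E f)%:E <= rho_sup G * (int_V f)%:E)%E &
      rho_inf G = rho_sup G -> edgewise_concave f ->
        (rho_inf G * (int_V f)%:E <= (int_E f)%:E)%E].
Proof.
split=> [fconv fv_ge0 | fconc fv_ge0 | regular fconv | regular fconc].
- apply: le_trans (degree_sum_le_rho_sup fv_ge0).
  by rewrite degree_sum_trapezoid lee_fin int_E_le_trapezoid.
- apply: le_trans (rho_inf_le_degree_sum fv_ge0) _.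
  by rewrite degree_sum_trapezoid lee_fin trapezoid_le_int_E.
- by rewrite -regular_degree_sum // degree_sum_trapezoid lee_fin int_E_le_trapezoid.
- rewrite regular -regular_degree_sum //.
  by rewrite degree_sum_trapezoid lee_fin trapezoid_le_int_E.
Qed.

End FiniteTypeFunction.

Local Open Scope ereal_scope.

Theorem mainTheorem1 (R : realType) (G : mgraph R) :
  (forall f : gfun G, C0fn f -> edgewise_convex f ->
     (forall v, (0 <= fv f v)%R) ->
     (int_E f)%:E <= rho_sup G * (int_V f)%:E) /\
  (forall f : gfun G, C0fn f -> edgewise_concave f -> gnonneg f ->
     rho_inf G * (int_V f)%:E <= (int_E f)%:E) /\
  (rho_inf G = rho_sup G ->
     (forall f : gfun G, C0fn f -> edgewise_convex f ->
        (int_E f)%:E <= rho_sup G * (int_V f)%:E) /\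
     (forall f : gfun G, C0fn f -> edgewise_concave f ->
        rho_inf G * (int_V f)%:E <= (int_E f)%:E)).
Proof.
split; [|split; [|move=> regular; split]] =>
  f [[fe_cont [fe_0 fe_len]] [A [B [A_fin [B_fin [fe_out fv_out]]]]]];
  have [cvx ccv rcvx rccv] := int_E_bounds fe_cont fe_0 fe_len A_fin B_fin fe_out fv_out.
- exact: cvx.
- by move=> fconc [fv_ge0 _]; exact: ccv.
- exact: rcvx.
- exact: rccv.
Qed.
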